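(* Let $G=(V,E)$ be a graph and let $f_0,f_t\colon V\to\{1,2\}$ be token-placements with $f_0\simeq f_t$. Let $G_B$ be the complete bipartite graph with parts $X=\{x_v : v\in V,\ f_0(v)=1\}$ and $Y=\{y_v: v\in V,\ f_t(v)=1\}$, where the edge $(x_u,y_v)$ has weight $w(x_u,y_v)=\mathrm{dist}_G(u,v)$, the length of a shortest $u$–$v$ path in $G$ ($\infty$ if none). Then $\mathrm{OPT}(f_0,f_t)=\min_M \sum_{e\in M}w(e)$, where the minimum is over all perfect matchings $M$ of $G_B$.
   Context: Graphs are finite, simple and undirected. A token-placement of $G=(V,E)$ with colors $C=\{1,\dots,c\}$ is a surjective map $f\colon V\to C$. Two distinct token-placements $f,f'$ are adjacent if there is an edge $uv\in E$ with $f'(u)=f(v)$, $f'(v)=f(u)$ and $f'(w)=f(w)$ for all other $w$. A swapping sequence between $f$ and $f'$ is a sequence $f_1=f,\dots,f_h=f'$ of token-placements with consecutive members adjacent; its length is $h-1$. $\mathrm{OPT}(f,f')$ is the minimum length of such a sequence ($\infty$ if none). $f\simeq f'$ means that for every connected component $K$ of $G$ and every color $i$, the numbers of vertices of $K$ with $f$-color $i$ and with $f'$-color $i$ coincide. *)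

From mathcomp Require Import all_boot.
Set Implicit Arguments. Unset Strict Implicit. Unset Printing Implicit Defensive.

(* Extended naturals: option nat, None = infinity.
   [is_einf P o] : o is the minimum of the set {k | P k} in N u {oo}
   (o = None iff the set is empty). *)
Definition is_einf (P : nat -> Prop) (o : option nat) : Prop :=
  match o with
  | Some k => P k /\ (forall j, P j -> k <= j)
  | None => forall j, ~ P j
  end.

Definition token_placement (T : finType) (c : nat) (f : T -> nat) : Prop :=
  (forall v, 1 <= f v <= c) /\ (forall i, 1 <= i <= c -> exists v, f v = i).

Definition tp_adj (T : finType) (e : rel T) (f f' : T -> nat) : Prop :=
  (exists w, f w <> f' w) /\
  exists u v, e u v /\ f' u = f v /\ f' v = f u /\
    (forall w, w <> u -> w <> v -> f' w = f w).

(* swapping sequence f_1 = f, ..., f_h = f' of length h-1 = k *)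
Definition swap_seq (T : finType) (c : nat) (e : rel T) (f f' : T -> nat) (k : nat) : Prop :=
  exists s : seq (T -> nat),
    [/\ size s = k.+1, nth f s 0 = f, nth f s k = f',
        (forall i, i <= k -> token_placement c (nth f s i)) &
        (forall i, i < k -> tp_adj e (nth f s i) (nth f s i.+1))].

Definition OPT_is (T : finType) (c : nat) (e : rel T) (f f' : T -> nat) (o : option nat) :=
  is_einf (swap_seq c e f f') o.

Definition walk (T : finType) (e : rel T) (u v : T) (k : nat) : Prop :=
  exists p : seq T, [/\ size p = k, path e u p & last u p = v].

Definition dist_is (T : finType) (e : rel T) (u v : T) (o : option nat) :=
  is_einf (walk e u v) o.

(* f ~= f' : for every connected component K (the class of some v) and
   every color i, same number of vertices of K colored i. *)
Definition tp_equiv (T : finType) (e : rel T) (f f' : T -> nat) : Prop :=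
  forall (v : T) (i : nat),
    #|[set w | connect e v w & f w == i]| = #|[set w | connect e v w & f' w == i]|.

(* Perfect matching of the complete bipartite graph G_B with parts
   X = {x_u | f0 u = 1}, Y = {y_v | ft v = 1}: a bijection M from X onto Y;
   the matching is {(x_u, y_(M u)) | u in X}. *)
Definition perfect_matching (T : finType) (f0 ft : T -> nat) (M : T -> T) : Prop :=
  [/\ (forall u, f0 u = 1 -> ft (M u) = 1),
      (forall u u', f0 u = 1 -> f0 u' = 1 -> M u = M u' -> u = u') &
      (forall v, ft v = 1 -> exists u, f0 u = 1 /\ M u = v)].

Definition matching_weight_fin (T : finType) (e : rel T) (f0 : T -> nat) (M : T -> T) (k : nat) :=
  exists d : T -> nat,
    (forall u, f0 u = 1 -> dist_is e u (M u) (Some (d u))) /\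
    k = \sum_(u : T | f0 u == 1) d u.

Definition min_matching_is (T : finType) (e : rel T) (f0 ft : T -> nat) (o : option nat) :=
  is_einf (fun k => exists M, perfect_matching f0 ft M /\ matching_weight_fin e f0 M k) o.

From mathcomp Require Import all_boot fingroup perm zify.
From Stdlib Require Import Classical FunctionalExtensionality IndefiniteDescription.
Set Implicit Arguments. Unset Strict Implicit. Unset Printing Implicit Defensive.

(* A swapping sequence moves a colour-1 token along an edge at every swap, so
   following the tokens gives a perfect matching together with walks whose total
   length is at most the length of the sequence.  Conversely, take a matching with
   walks and some u matched to an unoccupied v; let xy be the first edge of the
   walk u ~> v leaving the occupied vertices.  Exchanging the partners of x and u
   does not increase the total length, and then swapping the tokens on x and y
   decreases it by one; induction on the total length gives a swapping sequence. *)

Lemma is_einf_exists (P : nat -> Prop) n : P n -> exists m, is_einf P (Some m).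
Proof.
elim: n {-2}n (leqnn n) => [|n IH] m lemn Pm.
- by exists m; split=> // j _; lia.
- have [[j [ltjm Pj]]|nosmaller] := classic (exists j, j < m /\ P j).
  + by apply: (IH j) => //; lia.
  + exists m; split=> // j Pj; rewrite leqNgt; apply/negP => ltjm.
    by apply: nosmaller; exists j.
Qed.

Lemma is_einf_codominated (P Q : nat -> Prop) :
  (forall k, P k -> exists2 k', k' <= k & Q k') ->
  (forall k, Q k -> exists2 k', k' <= k & P k') ->
  forall o, is_einf P o <-> is_einf Q o.
Proof.
have dominated (P' Q' : nat -> Prop) :
    (forall k, P' k -> exists2 k', k' <= k & Q' k') ->
    (forall k, Q' k -> exists2 k', k' <= k & P' k') ->
    forall o, is_einf P' o -> is_einf Q' o.
  move=> PQ QP [k [P'k minP]|noP] /=.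
  - have [k' lek'k Qk'] := PQ k P'k; have [k'' lek''k' P'k''] := QP k' Qk'.
    have ->: k = k' by have := minP _ P'k''; lia.
    split=> // j Qj; have [j' lej'j P'j'] := QP j Qj; have := minP _ P'j'; lia.
  - by move=> j /QP [j' _ /noP].
by move=> PQ QP o; split; apply: dominated.
Qed.

Section Walks.
Variables (T : finType) (e : rel T).

Lemma walk_nil u : walk e u u 0.
Proof. by exists [::]. Qed.

Lemma walk_cons a b c n : e a b -> walk e b c n -> walk e a c n.+1.
Proof. by move=> eab [p [<- pp <-]]; exists (b :: p); rewrite /= eab. Qed.

Lemma walk_cat a b c m n : walk e a b m -> walk e b c n -> walk e a c (m + n).
Proof.
move=> [p [<- pp lp]] [q [<- pq <-]]; exists (p ++ q).
by rewrite size_cat cat_path last_cat lp pp pq.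
Qed.

Lemma walk_exit (p : pred T) a b n : walk e a b n -> p a -> ~~ p b ->
  exists x y i j,
    [/\ walk e a x i, e x y, walk e y b j, i + j.+1 = n & p x && ~~ p y].
Proof.
move=> [s [<- es <-]]; elim: s a es => [|c s IH] a /=; first by move=> _ ->.
case/andP=> eac es pa pb; have [pc|npc] := boolP (p c).
- have [x [y [i [j [wax exy wyb <- pxy]]]]] := IH c es pc pb.
  by exists x, y, i.+1, j; split=> //; exact: walk_cons wax.
- exists a, c, 0, (size s); split=> //; first exact: walk_nil.
    by exists s.
  by rewrite pa npc.
Qed.

Lemma dist_le_walk u v n : walk e u v n -> exists2 m, dist_is e u v (Some m) & m <= n.
Proof.
move=> w; have [m [wm minm]] := @is_einf_exists (walk e u v) n w.
by exists m; [split | exact: minm].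
Qed.

End Walks.

Section SwapSequences.
Variables (T : finType) (e : rel T).
Implicit Types f : T -> nat.

Lemma token_placement_perm c f (s : {perm T}) :
  token_placement c f -> token_placement c (f \o s).
Proof.
move=> [rf sf]; split=> [v|i /sf [w <-]]; first exact: rf.
by exists (s^-1 w)%g; rewrite /= permKV.
Qed.

Lemma tp_adj_tperm f x y : e x y -> f x <> f y -> tp_adj e f (f \o tperm x y).
Proof.
move=> exy fxy; split; first by exists x; rewrite /= tpermL.
exists x, y; rewrite /= tpermL tpermR; do 3!split=> //.
by move=> w wx wy; case: tpermP.
Qed.

Lemma tp_adjE f f1 :
  tp_adj e f f1 -> exists x y, [/\ e x y, f x <> f y & f1 = f \o tperm x y].
Proof.
move=> [[w fw] [x [y [exy [f1x [f1y f1E]]]]]].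
have f1_tperm : f1 =1 f \o tperm x y by move=> z /=; case: tpermP => [->|->|]; auto.
exists x, y; split=> //; last exact: functional_extensionality.
by move=> fxy; apply: fw; rewrite f1_tperm /=; case: tpermP => [->|->|].
Qed.

Lemma tp_adj2E f f1 : symmetric e -> token_placement 2 f -> tp_adj e f f1 ->
  exists x y, [/\ e x y, f x = 1, f y <> 1 & f1 = f \o tperm x y].
Proof.
move=> e_sym [rf _] /tp_adjE [x [y [exy fxy ->]]].
have [fx|fx] := eqVneq (f x) 1; first by exists x, y; split=> //; rewrite -fx; apply: nesym.
exists y, x; rewrite e_sym tpermC; split=> //; last exact/eqP.
by have := rf x; have := rf y; lia.
Qed.

Lemma swap_seq0 c f : token_placement c f -> swap_seq c e f f 0.
Proof. by move=> tpf; exists [:: f]; split=> // -[]. Qed.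

Lemma swap_seq0_eq c f f' : swap_seq c e f f' 0 -> f = f'.
Proof. by move=> [s [_ s0 sk _ _]]; rewrite -sk s0. Qed.

Lemma swap_seqS c f f' k :
  swap_seq c e f f' k.+1 <->
  exists f1, [/\ token_placement c f, tp_adj e f f1 & swap_seq c e f1 f' k].
Proof.
split.
- case=> -[|a s] [//= [sz] ->] sk tps adj.
  exists (nth f s 0); split; [exact: (tps 0) | exact: (adj 0) |].
  have nthE i : i < k.+1 -> nth (nth f s 0) s i = nth f s i.
    by move=> ltik; apply: set_nth_default; rewrite sz.
  exists s; split=> //; first by rewrite nthE.
  + by rewrite nthE.
  + by move=> i leik; rewrite nthE; [exact: (tps i.+1) | lia].
  + by move=> i ltik; rewrite !nthE; [exact: (adj i.+1) | lia | lia].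
- move=> [f1 [tpf adj [s [sz s0 sk tps adjs]]]].
  have nthE i : i < k.+1 -> nth f s i = nth f1 s i.
    by move=> ltik; apply: set_nth_default; rewrite sz.
  exists (f :: s); split=> //=; first by rewrite sz.
  + by rewrite nthE.
  + by case=> [|i] //= leik; rewrite nthE //; exact: tps.
  + case=> [|i] /= ltik; first by rewrite nthE // s0.
    by rewrite !nthE; [exact: adjs | lia | lia].
Qed.

End SwapSequences.

Section Matchings.
Variable T : finType.
Implicit Types f g k d : T -> nat.

Definition weight f d := \sum_(u | f u == 1) d u.

Lemma comp_tpermK f x y : f \o tperm x y \o tperm x y = f.
Proof. by apply: functional_extensionality => z /=; rewrite tpermK. Qed.

Lemma comp_tperm_id f x y : f x = f y -> f \o tperm x y = f.
Proof. by move=> fxy; apply: functional_extensionality => z /=; case: tpermP => [->|->|]. Qed.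

Lemma perfect_matching_id f : perfect_matching f f id.
Proof. by split=> // v fv; exists v. Qed.

Lemma perfect_matching_comp f g k (h M : T -> T) :
  perfect_matching f g h -> perfect_matching g k M -> perfect_matching f k (M \o h).
Proof.
move=> [h1 h2 h3] [M1 M2 M3]; split=> [u fu|u u' fu fu' /= Mhuu'|v /M3 [w [gw <-]]].
- exact/M1/h1.
- exact/h2/(M2 _ _ (h1 _ fu) (h1 _ fu')).
- by have [u [fu <-]] := h3 w gw; exists u.
Qed.

Lemma perfect_matching_tperm f x y : perfect_matching f (f \o tperm x y) (tperm x y).
Proof.
split=> [u fu|u u' _ _|v fv]; first by rewrite /= tpermK.
  exact: perm_inj.
by exists (tperm x y v); rewrite tpermK.
Qed.

Lemma perfect_matching_card f g h :
  perfect_matching f g h -> #|[set u | f u == 1]| = #|[set v | g v == 1]|.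
Proof.
move=> [h1 h2 h3].
have <- : h @: [set u | f u == 1] = [set v | g v == 1].
  apply/setP => v; rewrite inE; apply/imsetP/eqP => [[u]|/h3 [u [fu <-]]].
    by rewrite inE => /eqP fu ->; exact: h1.
  by exists u; rewrite // inE fu.
by rewrite card_in_imset // => u u'; rewrite !inE => /eqP fu /eqP fu'; exact: h2.
Qed.

Lemma two_colour_eq f g : token_placement 2 f -> token_placement 2 g ->
  #|[set u | f u == 1]| = #|[set u | g u == 1]| ->
  (forall v, g v = 1 -> f v = 1) -> f = g.
Proof.
move=> [rf _] [rg _] card_fg gf.
have sub_gf : [set u | g u == 1] \subset [set u | f u == 1].
  by apply/subsetP => z; rewrite !inE => /eqP /gf ->.
have eq_gf : [set u | g u == 1] = [set u | f u == 1].
  by apply/eqP; rewrite eqEcard sub_gf card_fg /=.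
apply: functional_extensionality => z.
move/setP/(_ z): eq_gf (rf z) (rg z); rewrite !inE.
by case: (f z) => [|[|[|?]]]; case: (g z) => [|[|[|?]]].
Qed.

Lemma weight_tperm f d x y : f x = 1 -> f y <> 1 ->
  weight (f \o tperm x y) d + d x = weight f d + d y.
Proof.
move=> fx fy; rewrite /weight (reindex_inj (@perm_inj _ (tperm x y))) /=.
under eq_bigl do rewrite tpermK.
rewrite [in LHS](bigD1 x) ?fx // [in RHS](bigD1 x) ?fx //= tpermL.
rewrite (eq_bigr d) => [|u /andP [/eqP fu ux]]; first lia.
by rewrite tpermD 1?eq_sym //; apply: contra_not_neq fy => <-.
Qed.

Lemma weight_upd f d x a : f x = 1 ->
  weight f [eta d with x |-> a] + d x = weight f d + a.
Proof.
move=> fx; rewrite /weight [in LHS](bigD1 x) ?fx // [in RHS](bigD1 x) ?fx //= eqxx.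
by rewrite (eq_bigr d) => [|u /andP [_ /negbTE ->]] //; lia.
Qed.

End Matchings.

Section WalkMatchings.
Variables (T : finType) (e : rel T).
Implicit Types f d : T -> nat.

Definition walk_matching f ft (M : T -> T) d :=
  perfect_matching f ft M /\ forall u, f u = 1 -> walk e u (M u) (d u).

Lemma walk_matching_id f : walk_matching f f id (fun=> 0).
Proof. by split=> [|u _]; [exact: perfect_matching_id | exact: walk_nil]. Qed.

Lemma walk_matching_move f ft M d x y n :
  walk_matching f ft M d -> f x = 1 -> f y <> 1 -> walk e y (M x) n ->
  walk_matching (f \o tperm x y) ft (M \o tperm x y) [eta d with y |-> n] /\
  weight (f \o tperm x y) [eta d with y |-> n] + d x = weight f d + n.
Proof.
move=> [pm wM] fx fy wyMx.
have xy : x != y by apply: contra_not_neq fy => <-.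
split.
- split.
    have pt := perfect_matching_tperm (f \o tperm x y) x y.
    by rewrite comp_tpermK in pt; exact: perfect_matching_comp pt pm.
  move=> u /=; case: tpermP => [->|->|ux /eqP uy]; first by move/fy.
    by rewrite eqxx.
  by rewrite (negbTE uy); exact: wM.
- have := weight_tperm [eta d with y |-> n] fx fy.
  rewrite /= (negbTE xy) eqxx => ->; congr (_ + _).
  by apply: eq_bigr => u /eqP fu /=; case: eqP => // uy; case: fy; rewrite -uy.
Qed.

(* After the exchange u reaches its new partner M x through x, and the walk
   x ~> M u is paid for by the part of the old walk of u beyond x. *)
Lemma walk_matching_rematch f ft M d x u i n :
  walk_matching f ft M d -> f x = 1 -> f u = 1 ->
  walk e u x i -> walk e x (M u) n -> i + n <= d u ->
  exists d', [/\ walk_matching f ft (M \o tperm x u) d', d' x = n &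
                 weight f d' <= weight f d].
Proof.
move=> [pm wM] fx fu wux wxMu le_in_du.
have pt := perfect_matching_tperm f x u.
rewrite comp_tperm_id ?fx ?fu // in pt.
have pm' := perfect_matching_comp pt pm.
have [xu|xu] := eqVneq x u; first subst u.
- exists [eta d with x |-> n]; split; last 2 first.
  + by rewrite /= eqxx.
  + by have := weight_upd d n fx; lia.
  split=> // z fz; rewrite /= tperm1 perm1.
  by case: eqP => [->|_]; [exact: wxMu | exact: wM].
- exists [eta [eta d with u |-> i + d x] with x |-> n]; split; last 2 first.
  + by rewrite /= eqxx.
  + have := weight_upd [eta d with u |-> i + d x] n fx.
    have := weight_upd d (i + d x) fu.
    rewrite /= (negbTE xu); lia.
  split=> // z fz /=.
  case: tpermP => [->|->|/eqP zx /eqP zu]; first by rewrite eqxx.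
    by rewrite eq_sym (negbTE xu) eqxx; exact: walk_cat wux (wM x fx).
  by rewrite (negbTE zx) (negbTE zu); exact: wM.
Qed.

Lemma walk_matching_dist f ft M d : walk_matching f ft M d ->
  exists d', (forall u, f u = 1 -> dist_is e u (M u) (Some (d' u))) /\
             weight f d' <= weight f d.
Proof.
move=> [_ wM].
have [d' hd'] : exists d', forall u,
    f u = 1 -> dist_is e u (M u) (Some (d' u)) /\ d' u <= d u.
  apply: (functional_choice
           (fun u m => f u = 1 -> dist_is e u (M u) (Some m) /\ m <= d u)) => u.
  have [fu|nfu] := eqVneq (f u) 1.
    by have [m dm le_md] := dist_le_walk (wM u fu); exists m.
  by exists 0 => fu; rewrite fu eqxx in nfu.
exists d'; split=> [u /hd' []//|].
by apply: leq_sum => u /eqP /hd' [].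
Qed.

Lemma walk_matching_of_swap_seq f ft k : symmetric e ->
  swap_seq 2 e f ft k -> exists M d, walk_matching f ft M d /\ weight f d <= k.
Proof.
move=> e_sym; elim: k f => [|k IH] f.
  move=> /swap_seq0_eq <-; exists id, (fun=> 0); split; first exact: walk_matching_id.
  by rewrite /weight big1.
case/swap_seqS => f1 [tpf adj /IH [M1 [d1 [wm1 le_d1k]]]].
have [x [y [exy fx fy f1E]]] := tp_adj2E e_sym tpf adj.
rewrite {adj}f1E in wm1 le_d1k.
have f1y : (f \o tperm x y) y = 1 by rewrite /= tpermR.
have f1x : (f \o tperm x y) x <> 1 by rewrite /= tpermL.
have wxM1y : walk e x (M1 y) (d1 y).+1 by apply: walk_cons exy (wm1.2 y f1y).
have [] := walk_matching_move wm1 f1y f1x wxM1y.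
rewrite (tpermC y x) comp_tpermK addnS -addSn => wm /addIn w_eq.
by exists (M1 \o tperm x y), [eta d1 with x |-> (d1 y).+1]; rewrite w_eq ltnS.
Qed.

Lemma walk_matching_decrease f ft M d v :
  token_placement 2 f -> walk_matching f ft M d -> ft v = 1 -> f v <> 1 ->
  exists f1 M1 d1, [/\ token_placement 2 f1, tp_adj e f f1,
                       walk_matching f1 ft M1 d1 & weight f1 d1 < weight f d].
Proof.
move=> tpf wm ftv fv; have [[_ _ surj] wM] := wm.
have [u [fu Muv]] := surj v ftv.
have wuv : walk e u v (d u) by rewrite -Muv; exact: wM.
have [x [y [i [j [wux exy wyv sz /andP [/eqP fx /eqP fy]]]]]] :=
  walk_exit (p := fun z => f z == 1) wuv (introT eqP fu) (introN eqP fv).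
have wxMu : walk e x (M u) j.+1 by rewrite Muv; exact: walk_cons exy wyv.
have [d' [wm' d'x le_d'd]] := walk_matching_rematch wm fx fu wux wxMu (eq_leq sz).
have wyM'x : walk e y ((M \o tperm x u) x) j by rewrite /= tpermL Muv.
have [wm1 w1] := walk_matching_move wm' fx fy wyM'x.
exists (f \o tperm x y), (M \o tperm x u \o tperm x y), [eta d' with y |-> j].
split=> //; first exact: token_placement_perm.
  by apply: tp_adj_tperm => //; rewrite fx; apply: nesym.
by rewrite -(ltn_add2r (d' x)) w1 d'x addnS ltnS leq_add2r.
Qed.

Lemma swap_seq_of_walk_matching f ft M d :
  token_placement 2 f -> token_placement 2 ft -> walk_matching f ft M d ->
  exists2 k, k <= weight f d & swap_seq 2 e f ft k.
Proof.
move=> + tpt; have [n] := ubnP (weight f d).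
elim: n => // n IH in f M d * => lt_wn tpf wm.
have [/existsP [v /andP [/eqP ftv /eqP fv]]|/existsPn none] :=
  boolP [exists v, (ft v == 1) && (f v != 1)].
- have [f1 [M1 [d1 [tp1 adj wm1 lt_w1]]]] := walk_matching_decrease tpf wm ftv fv.
  have [k le_k sk] := IH f1 M1 d1 (leq_trans lt_w1 (ltnSE lt_wn)) tp1 wm1.
  by exists k.+1; [lia | apply/swap_seqS; exists f1].
- have ->: f = ft.
    apply: two_colour_eq tpf tpt (perfect_matching_card wm.1) _ => v ftv.
    by have := none v; rewrite ftv eqxx /= negbK => /eqP.
  by exists 0 => //; exact: swap_seq0.
Qed.

End WalkMatchings.

Theorem mainTheorem6 (T : finType) (e : rel T)
  (e_sym : symmetric e) (e_irr : irreflexive e)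
  (f0 ft : T -> nat)
  (h0 : token_placement 2 f0) (ht : token_placement 2 ft)
  (heq : tp_equiv e f0 ft) :
  forall o : option nat, OPT_is 2 e f0 ft o <-> min_matching_is e f0 ft o.
Proof.
apply: is_einf_codominated => k.
- case/(walk_matching_of_swap_seq e_sym) => M [d [wm le_dk]].
  have [d' [dist_d' le_d'd]] := walk_matching_dist wm.
  exists (weight f0 d'); first exact: leq_trans le_d'd le_dk.
  by exists M; split; [case: wm | exists d'].
- case=> M [pm [d [dist_d ->]]].
  apply: (swap_seq_of_walk_matching h0 ht (M := M)); split=> // u fu.
  exact: (dist_d u fu).1.
Qed.
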